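(* Let $S:\overline{\mathcal{D}}\to\widehat{\mathbb{C}}$ be a weak B-involution with $\mathcal{D}=\bigsqcup_{i=1}^k\Omega_i$, let $\Sigma$ be its welded surface and $\mathcal{G}$ its welding graph. Then the connected components of $\Sigma$ are in bijective correspondence with the connected components of $\mathcal{G}$.
   Context: $\Omega_1,\dots,\Omega_k$ are pairwise disjoint finitely connected proper subdomains of $\widehat{\mathbb{C}}$ with $\mathrm{int}(\overline{\Omega_i})=\Omega_i$; $X\subset\partial\mathcal{D}$ finite with $\partial^0\mathcal{D}=\partial\mathcal{D}\setminus X$ a finite union of disjoint non-singular real-analytic curves; $S$ continuous on $\overline{\mathcal{D}}$, meromorphic on $\mathcal{D}$, mapping $\partial\mathcal{D}$ to itself and $X$ to itself with $S\circ S=\mathrm{id}$ on $\partial\mathcal{D}$, orientation-reversing on $\partial^0\mathcal{D}$. Set $\partial^0\Omega_i=\partial^0\mathcal{D}\cap\overline{\Omega_i}$. The welded surface $\Sigma$ is the compactification (by filling in punctures) of the Riemann surface obtained from two copies of $\mathcal{D}\cup\partial^0\mathcal{D}$ by identifying each $x\in\partial^0\mathcal{D}$ in the first copy with $S(x)$ in the second copy (this is a finite union of compact Riemann surfaces). The copies of $\Omega_i$ in the two copies are denoted $\Omega_i^\pm$. The welding graph $\mathcal{G}$ has vertices $v_1^\pm,\dots,v_k^\pm$, and edges exactly between $v_{i_1}^-$ and $v_{i_2}^+$ whenever $S(\partial^0\Omega_{i_1})\cap\partial^0\Omega_{i_2}\ne\emptyset$. *)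

Set Warnings "-notation-overridden,-ambiguous-paths,-notation-incompatible-prefix".
From HB Require Import structures.
From Stdlib Require Import Relations.
From mathcomp Require Import all_boot all_order all_algebra.
From mathcomp Require Import all_classical all_reals all_analysis.
From mathcomp Require Import generic_quotient.

Set Implicit Arguments.
Unset Strict Implicit.
Unset Printing Implicit Defensive.

Import Order.TTheory GRing.Theory Num.Theory numFieldNormedType.Exports.
Local Open Scope classical_set_scope.
Local Open Scope ring_scope.
Local Open Scope quotient_scope.

Section Glue.
Context {T : topologicalType} (r : T -> T -> Prop).

Definition glue_rel : rel T := fun x y => `[< clos_refl_sym_trans T r x y >].

Lemma glue_refl : reflexive glue_rel.
Proof. by move=> x; apply/asboolP; apply: rst_refl. Qed.
Lemma glue_sym : symmetric glue_rel.
Proof.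
move=> x y; apply/asboolP/asboolP; exact: rst_sym.
Qed.
Lemma glue_trans : transitive glue_rel.
Proof. by move=> y x z /asboolP Hxy /asboolP Hyz; apply/asboolP; apply: rst_trans Hxy Hyz. Qed.

Canonical glue_equiv := EquivRel glue_rel glue_refl glue_sym glue_trans.

Definition glue_space := quotient_topology {eq_quot glue_equiv}.
Definition glue_pi (x : T) : glue_space := \pi_(glue_space) x.
End Glue.


Notation Chat R := (one_point_compactification (R * R)%type).

Section Sphere.
Variable R : realType.
Local Notation Chat := (Chat R).

Definition cplx := (R * R)%type.

Definition c0 : cplx := (0, 0).
Definition cadd (z w : cplx) : cplx := (z.1 + w.1, z.2 + w.2).
Definition csub (z w : cplx) : cplx := (z.1 - w.1, z.2 - w.2).
Definition cmul (z w : cplx) : cplx := (z.1 * w.1 - z.2 * w.2, z.1 * w.2 + z.2 * w.1).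
Definition cnorm (z : cplx) : R := Num.sqrt (z.1 ^+ 2 + z.2 ^+ 2).
Definition cinv (z : cplx) : cplx :=
  (z.1 / (z.1 ^+ 2 + z.2 ^+ 2), - z.2 / (z.1 ^+ 2 + z.2 ^+ 2)).
Definition ci : cplx := (0, 1).
Definition creal (x : R) : cplx := (x, 0).

(* standard charts of the sphere: z on C, 1/z near infinity (None) *)
Definition in_chart (q z : Chat) : Prop :=
  match q with Some _ => z <> None | None => z <> Some c0 end.
Definition coord (q z : Chat) : cplx :=
  match q with
  | Some _ => match z with Some c => c | None => c0 end
  | None => match z with Some c => cinv c | None => c0 end
  end.
Definition param (q : Chat) (w : cplx) : Chat :=
  match q with
  | Some _ => Some w
  | None => if w == c0 then None else Some (cinv w)
  end.

Definition cdiff_at (g : cplx -> cplx) (w0 : cplx) : Prop :=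
  exists a : cplx, forall eps : R, 0 < eps -> exists2 del : R, 0 < del &
    forall h : cplx, cnorm h < del ->
      cnorm (csub (csub (g (cadd w0 h)) (g w0)) (cmul a h)) <= eps * cnorm h.

Definition holomorphic_on (U : set Chat) (f : Chat -> Chat) : Prop :=
  forall p, U p -> {for p, continuous f} /\
    cdiff_at (fun w => coord (f p) (f (param p w))) (coord p p).

(* meromorphic = holomorphic into the sphere, not identically infinity
   on any connected component of U *)
Definition meromorphic_on (U : set Chat) (f : Chat -> Chat) : Prop :=
  holomorphic_on U f /\
  forall p, U p -> exists2 q, connected_component U p q & f q <> None.

Definition series_rep (gamma : R -> Chat) (t0 : R) (a : nat -> cplx) (r : R) :=
  0 < r /\ forall t, `|t - t0| < r ->
    [/\ in_chart (gamma t0) (gamma t),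
        (fun N => \sum_(n < N) (a n).1 * (t - t0) ^+ n) @ \oo
           --> (coord (gamma t0) (gamma t)).1 &
        (fun N => \sum_(n < N) (a n).2 * (t - t0) ^+ n) @ \oo
           --> (coord (gamma t0) (gamma t)).2].

(* real-analytic and non-singular (non-vanishing derivative) at t0 *)
Definition ranalytic_ns_at (gamma : R -> Chat) (t0 : R) : Prop :=
  exists a r, series_rep gamma t0 a r /\ a 1%N <> c0.

(* non-singular real-analytic curve: an embedded real-analytic
   non-singular open arc (injective parametrisation by R) or closed
   curve (periodic parametrisation, injective modulo the period) *)
Definition analytic_curve (G : set Chat) : Prop :=
  exists gamma : R -> Chat,
  [/\ G = range gamma,
      forall t, ranalytic_ns_at gamma t,
      injective gamma \/
        exists2 T : R, 0 < T & forall s t, gamma s = gamma t <->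
                                 exists m : int, s = t + m%:~R * T &
      forall t eps, 0 < eps -> exists2 V, nbhs (gamma t) V &
        V `&` G `<=` gamma @` [set s | `|s - t| < eps]].

Definition local_param (B : set Chat) (gamma : R -> Chat) (t0 : R) : Prop :=
  ranalytic_ns_at gamma t0 /\ exists2 r : R, 0 < r &
  [/\ forall s1 s2, `|s1 - t0| < r -> `|s2 - t0| < r ->
        gamma s1 = gamma s2 -> s1 = s2,
      forall s, `|s - t0| < r -> B (gamma s) &
      exists2 V, nbhs (gamma t0) V &
        V `&` B `<=` gamma @` [set s | `|s - t0| < r]].

Definition left_of (A : set Chat) (gamma : R -> Chat) (t0 : R) : Prop :=
  exists a r, series_rep gamma t0 a r /\ exists2 del : R, 0 < del &
    forall eps : R, 0 < eps < del ->
      A (param (gamma t0) (cadd (a 0%N) (cmul (creal eps) (cmul ci (a 1%N))))) /\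
      ~ A (param (gamma t0) (csub (a 0%N) (cmul (creal eps) (cmul ci (a 1%N))))).

Definition orientation_reversing (A B : set Chat) (S : Chat -> Chat) : Prop :=
  forall gamma t0 gamma2 s0,
    local_param B gamma t0 -> local_param B gamma2 s0 ->
    gamma2 s0 = S (gamma t0) -> left_of A gamma t0 -> left_of A gamma2 s0 ->
    forall eta : R, 0 < eta -> exists2 del : R, 0 < del &
      forall t, t0 < t < t0 + del ->
        exists2 s, s0 - eta < s < s0 & S (gamma t) = gamma2 s.

Definition boundary (A : set Chat) : set Chat := closure A `\` interior A.

Definition finitely_connected_domain (O : set Chat) : Prop :=
  [/\ open O, O !=set0, connected O, O != setT &
      finite_set [set connected_component (~` O) x | x in ~` O]].

Section Data.
Variables (k : nat) (Om : 'I_k -> set Chat) (X : set Chat) (S : Chat -> Chat).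

Definition Dom : set Chat := \bigcup_i Om i.
Definition bd0 : set Chat := boundary Dom `\` X.
Definition bd0Om (i : 'I_k) : set Chat := bd0 `&` closure (Om i).

Definition weak_B_involution : Prop :=
  [/\ forall i, finitely_connected_domain (Om i) /\ interior (closure (Om i)) = Om i,
      forall i j, i != j -> Om i `&` Om j = set0,
      finite_set X /\ X `<=` boundary Dom,
      exists n (G : 'I_n -> set Chat),
        [/\ forall j, analytic_curve (G j),
            forall j j', j != j' -> G j `&` G j' = set0 &
            bd0 = \bigcup_j G j] &
      [/\ {within closure Dom, continuous S},
          meromorphic_on Dom S,
          S @` boundary Dom `<=` boundary Dom /\ S @` X `<=` X,
          forall x, boundary Dom x -> S (S x) = x &
          orientation_reversing Dom bd0 S]].

(* welded surface: two copies (false = first copy "-", true = second copy "+")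
   of D u bd0, x in the first copy identified with S x in the second *)
Definition weld_rel (p q : Chat * bool) : Prop :=
  exists2 x, bd0 x & p = (x, false) /\ q = (S x, true).

Definition welded_space := glue_space weld_rel.
Definition weld_pi (p : Chat * bool) : welded_space := glue_pi weld_rel p.
Definition welded_set : set welded_space :=
  weld_pi @` ((Dom `|` bd0) `*` setT).
Definition welded_components : set (set welded_space) :=
  [set connected_component welded_set q | q in welded_set].

(* welding graph on vertices (i, false) = v_i^-, (i, true) = v_i^+ *)
Definition weld_edge (i1 i2 : 'I_k) : Prop := S @` bd0Om i1 `&` bd0Om i2 !=set0.
Definition welding_adj : rel ('I_k * bool) := fun u v =>
  `[< (u.2 = false /\ v.2 = true /\ weld_edge u.1 v.1) \/
      (u.2 = true /\ v.2 = false /\ weld_edge v.1 u.1) >].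
Definition graph_component (v : 'I_k * bool) : set ('I_k * bool) :=
  [set w | connect welding_adj v w].
Definition graph_components : set (set ('I_k * bool)) := range graph_component.
End Data.
End Sphere.

Arguments Dom {R k} Om.
Arguments bd0 {R k} Om X.
Arguments bd0Om {R k} Om X i.
Arguments weak_B_involution {R k} Om X S.
Arguments weld_rel {R k} Om X S p q.
Arguments welded_space {R k} Om X S.
Arguments weld_pi {R k} Om X S p.
Arguments welded_set {R k} Om X S.
Arguments welded_components {R k} Om X S.
Arguments weld_edge {R k} Om X S i1 i2.
Arguments welding_adj {R k} Om X S u v.
Arguments graph_component {R k} Om X S v.
Arguments graph_components {R k} Om X S.

(* The welded surface is covered by 2k sheets, the images of the two copies of
   each Om_i u bd0 Om_i.  Each sheet is connected, since it lies between Om_i and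
   its closure, and the sheets of v_i^- and v_j^+ share a point exactly when
   the two vertices are adjacent, so a path in the welding graph gives a
   connected chain of sheets.  Conversely, for a component C of the graph, the
   points all of whose representatives touch only sheets of C form an open set;
   on the welded set its complement is the set of the same kind for the other
   vertices, hence no connected set leaves it.  Openness uses the continuity of
   S at the welding curves and the finiteness of the family of closures. *)

Set Warnings "-notation-overridden,-ambiguous-paths,-notation-incompatible-prefix".
From mathcomp Require Import all_boot all_order all_algebra.
From mathcomp Require Import all_classical all_reals all_analysis.
From mathcomp Require Import generic_quotient.
From Stdlib Require Import Relations.
Import numFieldNormedType.Exports.
Local Open Scope classical_set_scope.
Local Open Scope ring_scope.

Section TopologyFacts.
Context {T : topologicalType}.

Lemma connected_between {A B : set T} :
  connected A -> A `<=` B -> B `<=` closure A -> connected B.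
Proof.
move=> cA AB BA; apply/connectedP => E [E0 BE sepE].
have [AE|AE] : A `<=` E false \/ A `<=` E true.
  by apply: connected_subset sepE _ cA; rewrite -BE.
- have [z Ez] := E0 true.
  suff : (closure (E false) `&` E true) z by case: sepE => ->.
  by split=> //; apply: closureS AE _ (BA _ _); rewrite BE; right.
- have [z Ez] := E0 false.
  suff : (E false `&` closure (E true)) z by case: sepE => _ ->.
  by split=> //; apply: closureS AE _ (BA _ _); rewrite BE; left.
Qed.

Lemma closure_bigcup_finite (I : finType) (F : I -> set T) :
  closure (\bigcup_i F i) `<=` \bigcup_i closure (F i).
Proof.
have cF : closed (\bigcup_i closure (F i)).
  by apply: closed_bigcup => [|i _]; [exact: finite_finset|exact: closed_closure].
rewrite [X in _ `<=` X](closure_id _).1 //.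
by apply: closureS => y [i _ Fy]; exists i => //; exact: subset_closure.
Qed.

Lemma nbhs_closed_incidence {I : finType} {F : I -> set T} x :
  (forall i, closed (F i)) -> \forall y \near x, forall i, F i y -> F i x.
Proof.
move=> cF; set G := \bigcup_(i in [set i | ~ F i x]) F i.
have : nbhs x (~` G).
  apply: open_nbhs_nbhs; split; last by move=> [i /= nFi].
  by apply/closed_openC/closed_bigcup => [|i _]; [exact: finite_finset|].
by apply: filterS => y nGy i Fy; apply: contrapT => nFx; apply: nGy; exists i.
Qed.

Lemma continuous_pairl {U : topologicalType} (u : U) :
  continuous (fun x : T => (x, u)).
Proof. by move=> x; apply: cvg_pair; [exact: cvg_id|exact: cvg_cst]. Qed.

End TopologyFacts.

Lemma closed_boundary (R : realType) (A : set (Chat R)) : closed (boundary A).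
Proof.
by apply: closedI; [exact: closed_closure|exact/open_closedC/open_interior].
Qed.

Lemma one_point_compactification_accessible (T : topologicalType) :
  accessible_space T -> accessible_space (one_point_compactification T).
Proof.
move=> T1 [x|] [y|] // xy.
- have /T1 [U [oU Ux Uy]] : x != y by apply: contraNneq xy => ->.
  exists (Some @` U); split; first exact: one_point_compactification_open_some.
    by rewrite inE; exists x => //; rewrite -inE.
  by rewrite inE => -[z Uz [zy]]; move: Uy; rewrite inE -zy.
- exists (Some @` setT); split; last by rewrite inE => -[].
    exact/one_point_compactification_open_some/openT.
  by rewrite inE; exists x.
- have cy : closed [set y] by exact: accessible_closed_set1.
  exists (~` (Some @` [set y])); split; last by rewrite inE; apply; exists y.
    rewrite openE => -[z|] /= zy; rewrite /interior; last first.
      exists [set y]; first by split; [exact: compact_set1|].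
      by move=> [u|] //= [[u' nu [<-]]|//] [_ -> [e]]; apply: nu.
    have : nbhs z (~` [set y]).
      apply: open_nbhs_nbhs; split; first exact: closed_openC.
      by move=> /= zy'; apply: zy; exists y; rewrite ?zy'.
    move/one_point_compactification_some_nbhs; apply: filterS.
    by move=> _ [u uy <-] [_ -> [uy']]; apply: uy.
  by rewrite inE => -[].
Qed.

Lemma Chat_finite_set_closed (R : realType) (A : set (Chat R)) :
  finite_set A -> closed A.
Proof.
move: A; apply/accessible_finite_set_closed/one_point_compactification_accessible.
exact/hausdorff_accessible/norm_hausdorff.
Qed.

Section Gluing.
Context {T : topologicalType} (r : T -> T -> Prop).

Lemma glue_piP p q : glue_pi r p = glue_pi r q <-> clos_refl_sym_trans T r p q.
Proof.
split=> [pq|/asboolP pq]; last exact/eqquotP.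
have : glue_rel r p q by apply/eqquotP; exact: pq.
by move/asboolP.
Qed.

End Gluing.

Section InvolutiveWeld.
Context {T : Type} {B : set T} {S : T -> T}.
Hypotheses (SB : forall x, B x -> B (S x)) (SK : forall x, B x -> S (S x) = x).

Let weld (p q : T * bool) := exists2 x, B x & p = (x, false) /\ q = (S x, true).

Lemma rst_weld_one_step p q : clos_refl_sym_trans _ weld p q ->
  [\/ p = q, weld p q | weld q p].
Proof.
elim=> {p q} [p q|p|p q _ [->|pq|qp]|p q r _ Hpq _ Hqr]; try by constructor.
case: Hpq Hqr => [->|[x Bx [-> ->]]|[x Bx [-> ->]]] //
  [<-|[y By [exy ->]]|[y By [-> exy]]] //; try case: exy => //.
- by constructor 2; exists x.
- by move=> exy; constructor 1; rewrite -(SK _ Bx) -(SK _ By) exy.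
- by constructor 3; exists x.
- by move=> ->; constructor 1.
Qed.

Lemma weld_classP p y s : clos_refl_sym_trans _ weld p (y, s) <->
  p = (y, s) \/ B y /\ p = (S y, ~~ s).
Proof.
split=> [/rst_weld_one_step [->|[x Bx [-> [-> ->]]]|[x Bx [[-> ->] ->]]]|].
- by left.
- by right; split; [exact: SB|rewrite SK].
- by right.
case=> [->|[By ->]]; first exact: rst_refl.
case: s => /=; first by apply: rst_step; exists (S y); [exact: SB|rewrite SK].
by apply/rst_sym/rst_step; exists y.
Qed.

End InvolutiveWeld.

Section WeldedComponents.
Variables (R : realType) (k : nat) (Om : 'I_k -> set (Chat R)).
Variables (X : set (Chat R)) (S : Chat R -> Chat R).

Local Notation Dom := (Dom Om).
Local Notation bd := (boundary Dom).
Local Notation bd0 := (bd0 Om X).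
Local Notation wpi := (weld_pi Om X S).
Local Notation WS := (welded_set Om X S).
Local Notation adj := (welding_adj Om X S).
Local Notation CC := (connected_component WS).

Hypotheses (Om_open : forall i, open (Om i)) (Om_neq0 : forall i, Om i !=set0).
Hypothesis Om_connected : forall i, connected (Om i).
Hypothesis Om_disjoint : forall i j, i != j -> Om i `&` Om j = set0.
Hypotheses (X_closed : closed X) (X_bd : X `<=` bd).
Hypothesis S_continuous : {within closure Dom, continuous S}.
Hypotheses (S_bd : S @` bd `<=` bd) (S_X : S @` X `<=` X).
Hypothesis SK : forall x, bd x -> S (S x) = x.

Lemma bd0_S {x} : bd0 x -> bd0 (S x).
Proof.
move=> [bx nXx]; split; first by apply: S_bd; exists x.
by move=> XSx; apply: nXx; rewrite -(SK _ bx); apply: S_X; exists (S x).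
Qed.

Lemma bd0_SK {x} : bd0 x -> S (S x) = x.
Proof. by move=> [/SK]. Qed.

Lemma Dom_open : open Dom.
Proof. by apply: bigcup_open => i _. Qed.

Lemma Dom_bd {x} : Dom x -> ~ bd x.
Proof. by move=> Dx [_]; apply; move: Dom_open; rewrite openE; apply. Qed.

Lemma bd0_closure_Dom {x} : bd0 x -> closure Dom x.
Proof. by move=> [[]]. Qed.

Lemma closure_DomP {x} : closure Dom x -> exists i, closure (Om i) x.
Proof. by move/closure_bigcup_finite => [i _]; exists i. Qed.

Lemma Om_closure_eq {i j y} : Om i y -> closure (Om j) y -> i = j.
Proof.
move=> Oiy /(_ _ (open_nbhs_nbhs (conj (Om_open i) Oiy))) [z [Ojz Oiz]].
apply: contrapT => /eqP /Om_disjoint /seteqP [/(_ z) + _]; exact.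
Qed.

Lemma weld_piP p y s : wpi p = wpi (y, s) <-> p = (y, s) \/ bd0 y /\ p = (S y, ~~ s).
Proof. by rewrite glue_piP; apply: weld_classP; [exact: @bd0_S|exact: @bd0_SK]. Qed.

Definition incident_in (C : set ('I_k * bool)) (p : Chat R * bool) : Prop :=
  ~ X p.1 /\ forall i, closure (Om i) p.1 -> C (i, p.2).

(* Points of X are excluded: the weld gives no control of the sheets met near
   them, and the set would not be open. *)
Definition vertex_region (C : set ('I_k * bool)) : set (welded_space Om X S) :=
  [set q | forall p, wpi p = q -> incident_in C p].

Lemma open_vertex_region C : open (vertex_region C).
Proof.
change (open (wpi @^-1` vertex_region C)); rewrite openE => -[x s] /= xsC.
have [nXx xC] : incident_in C (x, s) by exact: xsC.
suff [V xV VC] : exists2 V, nbhs x V &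
    forall y, V y -> bd0 y -> incident_in C (S y, ~~ s).
  have nbhs_nX : nbhs x (~` X).
    by apply: open_nbhs_nbhs; split=> //; exact: closed_openC.
  have near_x := nbhs_closed_incidence x (fun i => @closed_closure _ (Om i)).
  pose U := [set y | forall i, closure (Om i) y -> closure (Om i) x].
  exists (U `&` ~` X `&` V, [set s]).
    by split=> //=; apply: filterI => //; exact: filterI.
  move=> [y _] /= [[[xy nXy] Vy] ->] p /weld_piP [->|[by0 ->]]; last exact: VC.
  by split => // i /xy /xC.
have [bx|nbx] := pselect (bd0 x); last first.
  exists (~` bd); last by move=> y nby [].
  apply: open_nbhs_nbhs; split; first exact/closed_openC/closed_boundary.
  by move=> bx; apply: nbx.
have [_ SxC] : incident_in C (S x, ~~ s) by apply: xsC; apply/weld_piP; right.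
exists [set y | closure Dom y ->
                forall i, closure (Om i) (S y) -> closure (Om i) (S x)].
  have near_Sx := nbhs_closed_incidence (S x) (fun i => @closed_closure _ (Om i)).
  exact: (subspace_continuousP _ S).1 S_continuous x (bd0_closure_Dom bx) _ near_Sx.
move=> y Sy by0; split; first by case: (bd0_S by0).
by move=> i /(Sy (bd0_closure_Dom by0)) /SxC.
Qed.

Local Notation welded := (Dom `|` bd0).

Lemma welded_notX {y} : welded y -> ~ X y.
Proof. by case=> [/Dom_bd + /X_bd|[]]. Qed.

Lemma welded_closure {y} : welded y -> exists i, closure (Om i) y.
Proof.
by move=> wy; apply: closure_DomP; case: wy => [/subset_closure|/bd0_closure_Dom].
Qed.

Lemma welding_adj_sym : ssrbool.symmetric adj.
Proof.
by move=> u v; apply/asboolP/asboolP => -[] [? []]; [right|left|right|left].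
Qed.

Lemma welding_adjS {y i j} s : bd0 y -> closure (Om i) y -> closure (Om j) (S y) ->
  adj (i, s) (j, ~~ s).
Proof.
move=> by0 iy jSy; apply/asboolP; case: s => /=; [right|left]; do 2!split=> //.
  exists y; split=> //; exists (S y); last exact: bd0_SK.
  by split=> //; exact: bd0_S.
by exists (S y); split; [exists y|split=> //; exact: bd0_S].
Qed.

Lemma connect_weld_rep y s i p j : welded y -> closure (Om i) y ->
  wpi p = wpi (y, s) -> closure (Om j) p.1 -> connect adj (i, s) (j, p.2).
Proof.
move=> wy iy /weld_piP [->|[by0 ->]] /= jp; last first.
  exact/connect1/(welding_adjS s by0 iy jp).
case: wy => [[l _ Oly]|by0].
  by rewrite -(Om_closure_eq Oly iy) -(Om_closure_eq Oly jp).
have [l lSy] := closure_DomP (bd0_closure_Dom (bd0_S by0)).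
apply: (@connect_trans _ _ (l, ~~ s)); apply/connect1.
  exact: welding_adjS s by0 iy lSy.
by rewrite -{2}(negbK s); apply: welding_adjS (bd0_S by0) lSy _; rewrite bd0_SK.
Qed.

Lemma vertex_region_graph_componentP v {q} : WS q ->
  vertex_region (graph_component Om X S v) q <->
  ~ vertex_region (~` graph_component Om X S v) q.
Proof.
move=> [[y s] [/= wy _] <-]; have [i iy] := welded_closure wy.
have rep_notX p : wpi p = wpi (y, s) -> ~ X p.1.
  by case/weld_piP => [->|[by0 ->]]; [exact: welded_notX|case: (bd0_S by0)].
split; first by move=> vC nvC; exact: (nvC _ erefl).2 _ iy ((vC _ erefl).2 _ iy).
move=> nvC p yp; split; first exact: rep_notX.
move=> j jp; apply: contrapT => nvj; apply: nvC => p' yp'; split.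
  exact: rep_notX.
move=> l lp' /= vl; apply: nvj; apply: connect_trans vl _.
apply: (@connect_trans _ _ (i, s)).
  by rewrite (sym_connect_sym welding_adj_sym); exact: connect_weld_rep yp' _.
exact: connect_weld_rep yp _.
Qed.

Lemma continuous_weld_pi s : continuous (fun y => wpi (y, s)).
Proof.
move=> y; apply: (@continuous_comp _ _ _ (fun y => (y, s)) wpi).
  exact: continuous_pairl.
exact: pi_continuous.
Qed.

Local Notation piece i := (Om i `|` bd0Om Om X i).

Definition weld_sheet i s : set (welded_space Om X S) :=
  (fun y => wpi (y, s)) @` piece i.

Lemma connected_weld_sheet i s : connected (weld_sheet i s).
Proof.
apply: connected_continuous_connected; last first.
  exact: continuous_subspaceT (continuous_weld_pi s).
by apply: (connected_between (Om_connected i)) => [y|y [/subset_closure|[]]]; [left|..].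
Qed.

Lemma sheet_component i s y z : piece i y -> piece i z ->
  CC (wpi (y, s)) (wpi (z, s)).
Proof.
move=> iy iz; exists (weld_sheet i s); last by exists z.
split; [by exists y|move=> _ [w iw <-]|exact: connected_weld_sheet].
exists (w, s) => //; split=> //.
by case: iw => [Oiw|[bw _]]; [left; exists i|right].
Qed.

Lemma welding_adj_component {u v z z'} : adj u v -> Om u.1 z -> Om v.1 z' ->
  CC (wpi (z, u.2)) (wpi (z', v.2)).
Proof.
have SbdE y : bd0 y -> wpi (S y, true) = wpi (y, false).
  by move=> by0; apply/weld_piP; right.
case: u v => [i s] [j t] /asboolP [] [/= -> [-> [_ [[y by0 <-] Sy]]]] Oz Oz'.
- apply: (@connected_component_trans _ _ (wpi (y, false))).
    by apply: (sheet_component i); [left|right].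
  rewrite -SbdE; last by case: by0.
  by apply: (sheet_component j); [right|left].
- apply: (@connected_component_trans _ _ (wpi (S y, true))).
    by apply: (sheet_component i); [left|right].
  rewrite SbdE; last by case: by0.
  by apply: (sheet_component j); [right|left].
Qed.

Lemma connect_component {u v z z'} : connect adj u v -> Om u.1 z -> Om v.1 z' ->
  CC (wpi (z, u.2)) (wpi (z', v.2)).
Proof.
move=> /connectP [p + ->]; elim: p u z => [|w p IH] [i s] z /=.
  by move=> _ Oz Oz'; apply: (sheet_component i); left.
move=> /andP [uw wp] Oz Oz'; have [z'' Oz''] := Om_neq0 w.1.
apply: (@connected_component_trans _ _ (wpi (z'', w.2))); last exact: IH.
exact: welding_adj_component uw Oz Oz''.
Qed.

Lemma component_sub_vertex_region {i s z} : Om i z ->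
  CC (wpi (z, s)) `<=` vertex_region (graph_component Om X S (i, s)).
Proof.
move=> Oiz; set C := graph_component Om X S (i, s).
have Dz : Dom z by exists i.
have zC : vertex_region C (wpi (z, s)).
  move=> p /weld_piP [->|[[/(Dom_bd Dz) //]]].
  split; first by apply: welded_notX; left.
  by move=> j /(Om_closure_eq Oiz) <-; exact: connect0.
suff <- : CC (wpi (z, s)) `&` vertex_region C = CC (wpi (z, s)) by move=> q [].
apply: component_connected.
- exists (wpi (z, s)); split=> //; apply: connected_component_refl.
  by exists (z, s) => //; split=> //; left.
- by exists (vertex_region C) => //; exact: open_vertex_region.
- exists (~` vertex_region (~` C)); first exact/open_closedC/open_vertex_region.
  apply/seteqP; split=> q [CCq qC]; split=> //;
    exact/(vertex_region_graph_componentP (i, s) (connected_component_sub CCq)).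
Qed.

Definition component_vertices (K : set (welded_space Om X S)) : set ('I_k * bool) :=
  [set v | exists z, Om v.1 z /\ K (wpi (z, v.2))].

Lemma component_verticesE s {i z} : Om i z ->
  component_vertices (CC (wpi (z, s))) = graph_component Om X S (i, s).
Proof.
move=> Oiz; apply/seteqP; split=> [[j t] [z' [Oz' Kz']]|[j t] isjt].
  exact: (component_sub_vertex_region Oiz _ Kz' _ erefl).2 _ (subset_closure Oz').
have [z' Oz'] := Om_neq0 j.
by exists z'; split=> //; exact: connect_component isjt Oiz Oz'.
Qed.

Lemma welded_componentE q : WS q -> exists i s z, Om i z /\ CC q = CC (wpi (z, s)).
Proof.
move=> [[y s] [/= [[i _ Oiy]|by0] _] <-]; first by exists i, s, y.
have [i iy] := closure_DomP (bd0_closure_Dom by0); have [z Oiz] := Om_neq0 i.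
exists i, s, z; split=> //.
apply: (@same_connected_component _ WS).
by apply: (sheet_component i); [right|left].
Qed.

Lemma set_bij_component_vertices :
  set_bij (welded_components Om X S) (graph_components Om X S) component_vertices.
Proof.
split.
- move=> _ [q /welded_componentE [i [s [z [Oiz ->]]]] <-].
  by rewrite (component_verticesE s Oiz); exists (i, s).
- move=> K1 K2; rewrite !inE => -[q1 /welded_componentE [i1 [s1 [z1 [Oz1 ->]]]] <-].
  move=> [q2 /welded_componentE [i2 [s2 [z2 [Oz2 ->]]]] <-].
  rewrite (component_verticesE s1 Oz1) (component_verticesE s2 Oz2) => Ceq.
  have i12 : graph_component Om X S (i1, s1) (i2, s2).
    by rewrite Ceq; exact: connect0.
  exact: (@same_connected_component _ WS) (connect_component i12 Oz1 Oz2).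
- move=> _ [[i s] _ <-]; have [z Oiz] := Om_neq0 i.
  exists (CC (wpi (z, s))); last exact: (component_verticesE s Oiz).
  by exists (wpi (z, s)) => //; exists (z, s) => //; split=> //; left; exists i.
Qed.

End WeldedComponents.

Theorem lemma4p12 (R : realType) (k : nat) (Om : 'I_k -> set (Chat R))
    (X : set (Chat R)) (S : Chat R -> Chat R) :
  weak_B_involution Om X S ->
  exists phi : set (welded_space Om X S) -> set ('I_k * bool),
    set_bij (welded_components Om X S) (graph_components Om X S) phi /\
    forall (i : 'I_k) (s : bool) (z : Chat R), Om i z ->
      phi (connected_component (welded_set Om X S) (weld_pi Om X S (z, s)))
        = graph_component Om X S (i, s).
Proof.
move=> [OmP Om_disjoint [/Chat_finite_set_closed X_closed X_bd] _].
move=> [S_cont _ [S_bd S_X] SK _].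
have Om_open i : open (Om i) by case: (OmP i) => -[].
have Om_connected i : connected (Om i) by case: (OmP i) => -[].
have Om_neq0 i : Om i !=set0 by case: (OmP i) => -[].
exists (@component_vertices R k Om X S); split.
  by apply: set_bij_component_vertices.
by move=> i s z Oiz; apply: component_verticesE.
Qed.
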